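(* Let $\eta$ and $\hat\eta$ be probability measures on $\mathbb{R}^d$ with positive, continuously differentiable Lebesgue densities (also denoted $\eta,\hat\eta$). Suppose $\hat\eta$ satisfies a Poincaré inequality with constant $C^{-1}$, $C>0$: for every (sufficiently regular) $\phi:\mathbb{R}^d\to\mathbb{R}$ with $\int\phi\,d\hat\eta=0$, $$\int\phi(\theta)^2\,\hat\eta(d\theta)\le C^{-1}\int\|\nabla\phi(\theta)\|_2^2\,\hat\eta(d\theta).$$ Then $$d_H(\eta,\hat\eta)\le(2C)^{-1/2}F_{2,\eta}(\eta,\hat\eta).$$
   Context: $d_H(\eta,\hat\eta)=\{\int|\eta(\theta)^{1/2}-\hat\eta(\theta)^{1/2}|^2\,d\theta\}^{1/2}$ is the Hellinger distance. $F_{2,\eta}(\eta,\hat\eta)=\left\{\int\|\nabla\log\eta(\theta)-\nabla\log\hat\eta(\theta)\|_2^2\,\eta(d\theta)\right\}^{1/2}$. *)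

From HB Require Import structures.
From mathcomp Require Import all_boot all_order all_algebra.
From mathcomp Require Import all_classical all_reals all_analysis.
Set Implicit Arguments. Unset Strict Implicit. Unset Printing Implicit Defensive.
Import Order.TTheory GRing.Theory Num.Theory.
Import numFieldNormedType.Exports.
Local Open Scope classical_set_scope.
Local Open Scope ring_scope.

(* R^d is represented by row vectors 'rV[R]_d.  We equip it with the Borel
   sigma-algebra, i.e. the product sigma-algebra generated by the coordinate
   projections (exactly as mathcomp-analysis does for n.-tuple T). *)
Definition rV_display : measure_display -> measure_display.
Proof. exact. Qed.

Section measurable_rV.
Context {R : realType} (n : nat).

Definition rV_coord : 'I_n -> 'rV[R]_n -> R := fun i x => x ord0 i.

Let rV_set0 : g_sigma_preimage rV_coord set0.
Proof. exact: sigma_algebra0. Qed.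

Let rV_setC A : g_sigma_preimage rV_coord A -> g_sigma_preimage rV_coord (~` A).
Proof. exact: sigma_algebraC. Qed.

Let rV_bigcup (F : _^nat) : (forall i, g_sigma_preimage rV_coord (F i)) ->
  g_sigma_preimage rV_coord (\bigcup_i (F i)).
Proof. exact: sigma_algebra_bigcup. Qed.

HB.instance Definition _ := @isMeasurable.Build (rV_display default_measure_display)
  'rV[R]_n (g_sigma_preimage rV_coord) rV_set0 rV_setC rV_bigcup.

End measurable_rV.

Section defs.
Context {R : realType} {d : nat}.

Definition is_lebesgue_Rd (mu : {measure set 'rV[R]_d -> \bar R}) : Prop :=
  forall a b : 'rV[R]_d, (forall i, a ord0 i <= b ord0 i) ->
    mu [set x | forall i, a ord0 i <= x ord0 i < b ord0 i] =
    (\prod_(i < d) (b ord0 i - a ord0 i))%:E.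

Definition ebasis (i : 'I_d) : 'rV[R]_d := delta_mx ord0 i.

Definition grad (f : 'rV[R]_d -> R) (x : 'rV[R]_d) : 'rV[R]_d :=
  \row_i ('D_(ebasis i) f x).

Definition sqnorm2 (v : 'rV[R]_d) : R := \sum_(i < d) v ord0 i ^+ 2.

Definition C1 (f : 'rV[R]_d -> R) : Prop :=
  (forall x, differentiable f x) /\
  (forall i, continuous (fun x => 'D_(ebasis i) f x)).

Definition sqrte (x : \bar R) : \bar R :=
  match x with
  | r%:E => (Num.sqrt r)%:E
  | +oo%E => +oo%E
  | -oo%E => 0%E
  end.

Local Open Scope ereal_scope.

Definition hellinger (mu : {measure set 'rV[R]_d -> \bar R})
    (eta etah : 'rV[R]_d -> R) : \bar R :=
  sqrte (\int[mu]_x ((`|Num.sqrt (eta x) - Num.sqrt (etah x)|) ^+ 2)%:E).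

Definition F2 (mu : {measure set 'rV[R]_d -> \bar R})
    (eta etah : 'rV[R]_d -> R) : \bar R :=
  sqrte (\int[mu]_x
    (sqnorm2 (grad (fun t => ln (eta t)) x - grad (fun t => ln (etah t)) x)
       * eta x)%:E).

Definition poincare (mu : {measure set 'rV[R]_d -> \bar R})
    (etah : 'rV[R]_d -> R) (C : R) : Prop :=
  forall phi : 'rV[R]_d -> R, C1 phi ->
    mu.-integrable setT (fun x => (phi x * etah x)%:E) ->
    \int[mu]_x (phi x * etah x)%:E = 0 ->
    \int[mu]_x (phi x ^+ 2 * etah x)%:E <=
      (C^-1)%:E * \int[mu]_x (sqnorm2 (grad phi x) * etah x)%:E.

Definition pos_C1_density (mu : {measure set 'rV[R]_d -> \bar R})
    (eta : 'rV[R]_d -> R) : Prop :=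
  (forall x, 0 < eta x)%R /\ C1 eta /\ \int[mu]_x (eta x)%:E = 1.

End defs.

(* Let BC := \int sqrt (eta etah) be the Bhattacharyya coefficient. The test
   function phi := sqrt (eta / etah) - BC is centred under etah and has
   etah-variance 1 - BC^2, and since
   grad sqrt (eta / etah) = 1/2 sqrt (eta / etah) grad log (eta / etah),
   its etah-energy is F_2^2 / 4. The Poincare inequality thus gives
   1 - BC^2 <= F_2^2 / (4 C), while d_H^2 = 2 - 2 BC <= 2 (1 - BC^2)
   because 0 <= BC <= 1. *)

From Pilot Require Import Defs.
From HB Require Import structures.
From mathcomp Require Import all_boot all_order all_algebra.
From mathcomp Require Import all_classical all_reals all_analysis.
From mathcomp Require Import ring lra measurable_realfun.
Set Implicit Arguments. Unset Strict Implicit.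
Import Order.TTheory GRing.Theory Num.Theory.
Import numFieldNormedType.Exports.
Local Open Scope classical_set_scope.
Local Open Scope ring_scope.

Section rV_measurability.
Context {R : realType} {n : nat}.

Lemma measurable_rV_coord_preimage (i : 'I_n) (A : set R) : measurable A ->
  measurable (@rV_coord R n i @^-1` A).
Proof.
move=> mA; apply: sub_sigma_algebra.
rewrite -bigcup_seq/=; exists i => /=; first by rewrite mem_index_enum.
by exists A => //; rewrite setTI.
Qed.

Definition rat_box (q : {ffun 'I_n -> rat * rat}) : set 'rV[R]_n :=
  [set x | forall i, ratr (q i).1 < x ord0 i < ratr (q i).2].

Lemma measurable_rat_box q : measurable (rat_box q).
Proof.
have -> : rat_box q = \bigcap_(i in [set: 'I_n])
    (@rV_coord R n i @^-1` `](ratr (q i).1), (ratr (q i).2)[%classic).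
  apply/seteqP; split => x /=.
    by move=> h i _; rewrite /rV_coord /= in_itv /= h.
  by move=> h i; have := h i I; rewrite /rV_coord /= in_itv.
apply: fin_bigcap_measurable; first exact: finite_finset.
by move=> i _; apply: measurable_rV_coord_preimage; exact: measurable_itv.
Qed.

Lemma rat_box_subset_nbhs (O : set 'rV[R]_n) x : open O -> O x ->
  exists q, rat_box q x /\ rat_box q `<=` O.
Proof.
move=> oO Ox; have /nbhs_ballP[e /= e0 eO] := oO x Ox.
have rat_itv i : exists p : rat * rat,
    (x ord0 i - e < ratr p.1 < x ord0 i) && (x ord0 i < ratr p.2 < x ord0 i + e).
  have [a ha] := @rat_in_itvoo R (x ord0 i - e) (x ord0 i) (ltac:(rewrite gtrBl; exact: e0)).
  have [b hb] := @rat_in_itvoo R (x ord0 i) (x ord0 i + e) (ltac:(rewrite ltrDl; exact: e0)).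
  by exists (a, b); rewrite !in_itv /= in ha hb; rewrite ha hb.
have [f hf] := choice rat_itv.
exists [ffun i => f i]; split.
  by move=> i; rewrite ffunE; have /andP[/andP[_ ->] /andP[-> _]] := hf i.
move=> y hy; apply: eO.
rewrite mx_norm_ball /ball_ /Num.norm /= mx_normrE.
apply/bigmax_ltP; split => // -[i j] _ /=.
rewrite !mxE (ord1 i).
have := hy j; rewrite ffunE => /andP[h1 h2].
have /andP[/andP[h3 h4] /andP[h5 h6]] := hf j.
by rewrite ltr_norml; apply/andP; split; [rewrite ltrBrDl|rewrite ltrBlDl]; lra.
Qed.

(* Open sets are countable unions of rational boxes, hence lie in the
   sigma-algebra generated by the coordinates. *)
Lemma rV_open_measurable (O : set 'rV[R]_n) : open O -> measurable O.
Proof.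
move=> oO; pose F q := if pselect (rat_box q `<=` O) then rat_box q else set0.
have -> : O = \bigcup_q F q.
  apply/seteqP; split => [x Ox|x [q _]]; rewrite /F.
    have [q [qx qO]] := rat_box_subset_nbhs oO Ox.
    by exists q => //; case: pselect.
  by case: pselect => // qO /qO.
apply: countable_bigcupT_measurable; first exact: countableP.
by move=> q; rewrite /F; case: pselect => qO; [exact: measurable_rat_box|exact: measurable0].
Qed.

Lemma rV_continuous_measurable_fun (f : 'rV[R]_n -> R) :
  continuous f -> measurable_fun setT f.
Proof.
move=> /continuousP cf; apply: (measurability _ (RGenOpens.measurableE R)).
move=> _ [_ [a [b ->] <-]]; apply: measurableI => //.
by apply: rV_open_measurable; apply/cf/interval_open.
Qed.

End rV_measurability.

Section scalar_chain_rule.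
Context {R : realType} {V : normedModType R}.
Implicit Types (f : V -> R) (x v : V).

Lemma differentiable_scalar_comp (h : R -> R) f x h' :
  is_derive (f x) 1 h h' -> differentiable f x -> differentiable (h \o f) x.
Proof.
move=> hd fd; apply: differentiable_comp => //.
by apply/derivable1_diffP; exact: ex_derive.
Qed.

Lemma derive_scalar_comp (h : R -> R) f x h' v :
  is_derive (f x) 1 h h' -> differentiable f x -> 'D_v (h \o f) x = h' * 'D_v f x.
Proof.
move=> hd fd; have dh : differentiable h (f x).
  by apply/derivable1_diffP; exact: ex_derive.
rewrite deriveE; last exact: differentiable_scalar_comp hd fd.
rewrite diff_comp // /= (deriveE v fd) (diff1E dh) derive1E derive_val.
by rewrite mulrC.
Qed.

Lemma differentiable_ln_comp f x : 0 < f x -> differentiable f x ->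
  differentiable (fun y => ln (f y)) x.
Proof. by move=> fx0; exact: differentiable_scalar_comp (is_derive1_ln fx0). Qed.

Lemma derive_ln_comp f x v : 0 < f x -> differentiable f x ->
  'D_v (fun y => ln (f y)) x = (f x)^-1 * 'D_v f x.
Proof. by move=> fx0; exact: derive_scalar_comp (is_derive1_ln fx0). Qed.

Lemma continuous_derive_ln_comp f v : (forall x, 0 < f x) ->
  (forall x, differentiable f x) -> continuous (fun x => 'D_v f x) ->
  continuous (fun x => 'D_v (fun y => ln (f y)) x).
Proof.
move=> f0 df cDf.
have -> : (fun x => 'D_v (fun y => ln (f y)) x) = (fun x => (f x)^-1 * 'D_v f x).
  by apply: funext => x; exact: derive_ln_comp.
move=> x; apply: (continuousM (s := fun x => (f x)^-1) (t := fun x => 'D_v f x)).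
  by apply: continuousV; [rewrite gt_eqF|exact: differentiable_continuous].
exact: cDf.
Qed.

Lemma derive_sub_cst f (c : R) x v : derivable f x v -> 'D_v (f - cst c) x = 'D_v f x.
Proof. by move=> fd; rewrite deriveB // derive_cst subr0. Qed.

End scalar_chain_rule.

Section rV_calculus.
Context {R : realType} {d : nat}.

Lemma grad_sub_cst (f : 'rV[R]_d -> R) c x : differentiable f x ->
  grad (f - cst c) x = grad f x.
Proof.
by move=> fd; apply/rowP => i; rewrite !mxE derive_sub_cst //; exact: diff_derivable.
Qed.

Lemma sqnorm2Z (a : R) (v : 'rV[R]_d) : sqnorm2 (a *: v) = a ^+ 2 * sqnorm2 v.
Proof. by rewrite /sqnorm2 mulr_sumr; apply: eq_bigr => i _; rewrite mxE exprMn. Qed.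

Lemma C1_sub_cst (f : 'rV[R]_d -> R) c : C1 f -> C1 (f - cst c).
Proof.
move=> [df cDf]; split => [x|i]; first exact: differentiableB.
have -> : (fun x => 'D_(ebasis i) (f - cst c) x) = (fun x => 'D_(ebasis i) f x).
  by apply: funext => x; apply: derive_sub_cst; exact: diff_derivable.
exact: cDf.
Qed.

End rV_calculus.

Section sqrt_ratio.
Context {R : realType} {d : nat} (eta etah : 'rV[R]_d -> R).
Hypotheses (eta0 : forall x, 0 < eta x) (etah0 : forall x, 0 < etah x).

(* sqrt (eta / etah), written through expR and ln so that the chain rule applies *)
Definition sqrt_ratio x := expR (2^-1 * (ln (eta x) - ln (etah x))).

Definition geomean x := sqrt_ratio x * etah x.

Definition rel_fisher_integrand x :=
  sqnorm2 (grad (fun t => ln (eta t)) x - grad (fun t => ln (etah t)) x) * eta x.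

Lemma sqrt_ratio_gt0 x : 0 < sqrt_ratio x.
Proof. exact: expR_gt0. Qed.

Lemma sqr_sqrt_ratio x : sqrt_ratio x ^+ 2 * etah x = eta x.
Proof.
rewrite -expRM_natl mulrA divff ?pnatr_eq0 // mul1r expRB !lnK ?posrE //.
by rewrite mulfVK // gt_eqF.
Qed.

Lemma geomean_gt0 x : 0 < geomean x.
Proof. by rewrite mulr_gt0 ?sqrt_ratio_gt0. Qed.

Lemma sqrt_mul_sqrt_geomean x : Num.sqrt (eta x) * Num.sqrt (etah x) = geomean x.
Proof.
have -> : Num.sqrt (eta x) = sqrt_ratio x * Num.sqrt (etah x).
  have -> : eta x = (sqrt_ratio x * Num.sqrt (etah x)) ^+ 2.
    by rewrite exprMn sqr_sqrtr ?ltW // sqr_sqrt_ratio.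
  by rewrite sqrtr_sqr ger0_norm // mulr_ge0 ?sqrtr_ge0 // ltW ?sqrt_ratio_gt0.
by rewrite -mulrA -expr2 sqr_sqrtr ?ltW.
Qed.

Lemma hellinger_integrandE x :
  `|Num.sqrt (eta x) - Num.sqrt (etah x)| ^+ 2 = eta x + etah x - 2 * geomean x.
Proof.
rewrite real_normK ?num_real // sqrrB !sqr_sqrtr ?ltW // -sqrt_mul_sqrt_geomean.
by rewrite -mulr_natr; ring.
Qed.

Lemma geomean_le x : 2 * geomean x <= eta x + etah x.
Proof. by rewrite -subr_ge0 -hellinger_integrandE sqr_ge0. Qed.

Lemma rel_fisher_integrand_ge0 x : 0 <= rel_fisher_integrand x.
Proof. by apply: mulr_ge0; [apply: sumr_ge0 => i _; exact: sqr_ge0|exact: ltW]. Qed.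

Hypotheses (deta : forall x, differentiable eta x)
  (detah : forall x, differentiable etah x).

Let half_log_ratio :=
  (2^-1 : R) \*: ((fun y => ln (eta y)) - (fun y => ln (etah y))).

Let sqrt_ratioE : sqrt_ratio = expR \o half_log_ratio.
Proof. by []. Qed.

Let differentiable_half_log_ratio x : differentiable half_log_ratio x.
Proof.
by apply/differentiableZ/differentiableB; exact: differentiable_ln_comp.
Qed.

Lemma differentiable_sqrt_ratio x : differentiable sqrt_ratio x.
Proof.
by rewrite sqrt_ratioE; exact: differentiable_scalar_comp (is_derive_expR _) _.
Qed.

Lemma derive_sqrt_ratio x v : 'D_v sqrt_ratio x =
  2^-1 * sqrt_ratio x * ('D_v (fun y => ln (eta y)) x - 'D_v (fun y => ln (etah y)) x).
Proof.
have dl (f : 'rV[R]_d -> R) : (forall z, 0 < f z) ->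
    (forall z, differentiable f z) -> derivable (fun t => ln (f t)) x v.
  by move=> f0 df; apply/diff_derivable/differentiable_ln_comp.
rewrite sqrt_ratioE (derive_scalar_comp _ (is_derive_expR _)) //.
rewrite deriveZ /=; last exact: derivableB (dl _ eta0 deta) (dl _ etah0 detah).
rewrite deriveB; [|exact: dl|exact: dl].
by rewrite -scalerAr scalerAl.
Qed.

Lemma continuous_sqrt_ratio : continuous sqrt_ratio.
Proof. by move=> x; exact/differentiable_continuous/differentiable_sqrt_ratio. Qed.

Lemma grad_sqrt_ratio x : grad sqrt_ratio x =
  (2^-1 * sqrt_ratio x) *: (grad (fun t => ln (eta t)) x - grad (fun t => ln (etah t)) x).
Proof. by apply/rowP => i; rewrite !mxE derive_sqrt_ratio. Qed.

Lemma sqnorm2_grad_sqrt_ratio x :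
  sqnorm2 (grad sqrt_ratio x) * etah x = 4^-1 * rel_fisher_integrand x.
Proof.
rewrite grad_sqrt_ratio sqnorm2Z /rel_fisher_integrand -sqr_sqrt_ratio.
have -> : (4 : R)^-1 = 2^-1 * 2^-1 by rewrite -invfM -natrM.
by ring.
Qed.

Hypotheses (cDeta : forall i, continuous (fun x => 'D_(ebasis i) eta x))
  (cDetah : forall i, continuous (fun x => 'D_(ebasis i) etah x)).

Lemma C1_sqrt_ratio : C1 sqrt_ratio.
Proof.
split=> [|i]; first exact: differentiable_sqrt_ratio.
have -> : (fun x => 'D_(ebasis i) sqrt_ratio x) = (fun x => 2^-1 * sqrt_ratio x *
    ('D_(ebasis i) (fun y => ln (eta y)) x - 'D_(ebasis i) (fun y => ln (etah y)) x)).
  by apply: funext => x; exact: derive_sqrt_ratio.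
move=> x; apply: (@continuousM _ _ (fun x => 2^-1 * sqrt_ratio x)).
  apply: (@continuousM _ _ (cst 2^-1) sqrt_ratio x); first exact: cst_continuous.
  exact: continuous_sqrt_ratio.
by apply: continuousB; exact: continuous_derive_ln_comp.
Qed.

Lemma measurable_rel_fisher_integrand : measurable_fun setT rel_fisher_integrand.
Proof.
apply: measurable_funM; last first.
  by apply: rV_continuous_measurable_fun => x; exact: differentiable_continuous.
apply: measurable_sum => i /=; apply: measurable_funX.
apply: (eq_measurable_fun (fun x => 'D_(ebasis i) (fun t => ln (eta t)) x
    - 'D_(ebasis i) (fun t => ln (etah t)) x)) => [x _|]; first by rewrite !mxE.
by apply: measurable_funB; apply: rV_continuous_measurable_fun;
  exact: continuous_derive_ln_comp.
Qed.

End sqrt_ratio.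

Section integral_lin2.
Context {d : measure_display} {T : measurableType d} {R : realType}.
Variable mu : {measure set T -> \bar R}.
Implicit Types f g : T -> R.

Lemma ge0_integrable_fin f : (forall x, 0 <= f x) -> measurable_fun setT f ->
  (\int[mu]_x (f x)%:E < +oo)%E -> mu.-integrable setT (EFin \o f).
Proof.
move=> f0 mf fioo; apply/integrableP; split; first exact/measurable_EFinP.
by rewrite (eq_integral (fun x => (f x)%:E)) // => x _; rewrite /= ger0_norm.
Qed.

Lemma integrable_lin2 f g a b : mu.-integrable setT (EFin \o f) ->
  mu.-integrable setT (EFin \o g) ->
  mu.-integrable setT (EFin \o (fun x => a * f x + b * g x)).
Proof.
move=> fi gi; apply: (eq_integrable measurableT _ _ _ (integrableD measurableT
  (integrableZl measurableT a fi) (integrableZl measurableT b gi))) => x _ //.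
Qed.

Lemma integral_lin2 f g a b : mu.-integrable setT (EFin \o f) ->
  mu.-integrable setT (EFin \o g) ->
  (\int[mu]_x (a * f x + b * g x)%:E =
   a%:E * \int[mu]_x (f x)%:E + b%:E * \int[mu]_x (g x)%:E)%E.
Proof.
move=> fi gi; rewrite -!integralZl //.
by rewrite -integralD //; exact: integrableZl.
Qed.

End integral_lin2.

Section bhattacharyya.
Context {R : realType} {d : nat} (mu : {measure set 'rV[R]_d -> \bar R}).
Variables eta etah : 'rV[R]_d -> R.
Hypotheses (eta0 : forall x, 0 < eta x) (etah0 : forall x, 0 < etah x).
Hypotheses (deta : forall x, differentiable eta x)
  (detah : forall x, differentiable etah x).
Hypotheses (ieta : (\int[mu]_x (eta x)%:E = 1)%E)
  (ietah : (\int[mu]_x (etah x)%:E = 1)%E).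

Local Notation geomean := (geomean eta etah).

Let measurable_density (f : 'rV[R]_d -> R) :
  (forall x, differentiable f x) -> measurable_fun setT f.
Proof.
by move=> df; apply: rV_continuous_measurable_fun => x; exact: differentiable_continuous.
Qed.

Let integrable_density (f : 'rV[R]_d -> R) : (forall x, 0 < f x) ->
  (forall x, differentiable f x) -> (\int[mu]_x (f x)%:E = 1)%E ->
  mu.-integrable setT (EFin \o f).
Proof.
move=> f0 df fi; apply: ge0_integrable_fin; last by rewrite fi ltry.
  by move=> x; exact: ltW.
exact: measurable_density.
Qed.

Let integrable_eta := integrable_density eta0 deta ieta.
Let integrable_etah := integrable_density etah0 detah ietah.

Lemma integrable_geomean : mu.-integrable setT (EFin \o geomean).
Proof.
apply: (@le_integrable _ _ _ mu setT measurableT _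
  (EFin \o (fun x => 1 * eta x + 1 * etah x))).
- apply/measurable_EFinP/measurable_funM; last exact: measurable_density.
  by apply: rV_continuous_measurable_fun; exact: continuous_sqrt_ratio.
- move=> x _; rewrite /= lee_fin !mul1r ger0_norm ?ltW ?geomean_gt0 //.
  rewrite ger0_norm; last by rewrite ltW ?addr_gt0.
  by have := geomean_le eta0 etah0 x; have := geomean_gt0 eta etah0 x; lra.
- exact: integrable_lin2.
Qed.

Definition bhattacharyya := fine (\int[mu]_x (geomean x)%:E).

Lemma integral_geomean : (\int[mu]_x (geomean x)%:E = bhattacharyya%:E)%E.
Proof. by rewrite fineK //; exact: (integrable_fin_num measurableT integrable_geomean). Qed.

Lemma bhattacharyya_ge0 : 0 <= bhattacharyya.
Proof.
by rewrite fine_ge0 // integral_ge0 // => x _; rewrite lee_fin ltW ?geomean_gt0.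
Qed.

Lemma integral_hellinger_integrand :
  (\int[mu]_x ((`|Num.sqrt (eta x) - Num.sqrt (etah x)|) ^+ 2)%:E
   = (2 - 2 * bhattacharyya)%:E)%E.
Proof.
rewrite (eq_integral (fun x => (1 * eta x + 1 * (1 * etah x + (-2) * geomean x))%:E)).
  rewrite integral_lin2 //; last exact: integrable_lin2 integrable_geomean.
  rewrite integral_lin2 //; last exact: integrable_geomean.
  rewrite ieta ietah integral_geomean /=.
  by rewrite -!EFinM -!EFinD; congr (_%:E); ring.
by move=> x _; rewrite hellinger_integrandE //; congr (_%:E); ring.
Qed.

Lemma bhattacharyya_le1 : bhattacharyya <= 1.
Proof.
have : (0 <= \int[mu]_x ((`|Num.sqrt (eta x) - Num.sqrt (etah x)|) ^+ 2)%:E)%E.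
  by apply: integral_ge0 => x _; rewrite lee_fin sqr_ge0.
by rewrite integral_hellinger_integrand lee_fin; lra.
Qed.

Local Notation centered := (sqrt_ratio eta etah - cst bhattacharyya).

Let centeredE x : centered x = sqrt_ratio eta etah x - bhattacharyya.
Proof. by []. Qed.

Lemma integrable_centered : mu.-integrable setT (fun x => (centered x * etah x)%:E).
Proof.
apply: (eq_integrable measurableT _ _ _
  (integrable_lin2 1 (- bhattacharyya) integrable_geomean integrable_etah)).
by move=> x _ /=; rewrite centeredE /geomean; congr (_%:E); ring.
Qed.

Lemma integral_centered : (\int[mu]_x (centered x * etah x)%:E = 0)%E.
Proof.
rewrite (eq_integral (fun x => (1 * geomean x + (- bhattacharyya) * etah x)%:E)).
  rewrite (integral_lin2 _ _ integrable_geomean integrable_etah).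
  rewrite integral_geomean ietah.
  by rewrite -!EFinM -EFinD; congr (_%:E); ring.
by move=> x _; rewrite centeredE /geomean; congr (_%:E); ring.
Qed.

Lemma integral_centered_sqr :
  (\int[mu]_x (centered x ^+ 2 * etah x)%:E = (1 - bhattacharyya ^+ 2)%:E)%E.
Proof.
rewrite (eq_integral (fun x =>
    (1 * eta x + 1 * ((-2 * bhattacharyya) * geomean x + bhattacharyya ^+ 2 * etah x))%:E)).
  rewrite integral_lin2 //; last exact: integrable_lin2 integrable_geomean _.
  rewrite integral_lin2 //; last exact: integrable_geomean.
  rewrite ieta ietah integral_geomean.
  by rewrite -!EFinM -!EFinD; congr (_%:E); ring.
move=> x _; congr (_%:E).
by rewrite centeredE -(sqr_sqrt_ratio eta0 etah0 x) /geomean; ring.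
Qed.

Hypotheses (cDeta : forall i, continuous (fun x => 'D_(ebasis i) eta x))
  (cDetah : forall i, continuous (fun x => 'D_(ebasis i) etah x)).

Lemma integral_grad_centered :
  (\int[mu]_x (sqnorm2 (grad centered x) * etah x)%:E =
   (4^-1)%:E * \int[mu]_x (rel_fisher_integrand eta etah x)%:E)%E.
Proof.
rewrite -ge0_integralZl_EFin //.
- apply: eq_integral => x _.
  by rewrite grad_sub_cst ?sqnorm2_grad_sqrt_ratio ?EFinM //; exact: differentiable_sqrt_ratio.
- by move=> x _; rewrite lee_fin rel_fisher_integrand_ge0.
- by apply/measurable_EFinP; exact: measurable_rel_fisher_integrand.
Qed.

Lemma poincare_bhattacharyya (C : R) : poincare mu etah C ->
  ((1 - bhattacharyya ^+ 2)%:E <=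
   C^-1%:E * ((4^-1)%:E * \int[mu]_x (rel_fisher_integrand eta etah x)%:E))%E.
Proof.
move=> P; rewrite -integral_centered_sqr -integral_grad_centered.
apply: P; [exact/C1_sub_cst/C1_sqrt_ratio|exact: integrable_centered|exact: integral_centered].
Qed.

End bhattacharyya.

Lemma Defs_sqrteE {R : realType} (x : \bar R) : Defs.sqrte x = sqrte x.
Proof. by case: x. Qed.

Lemma sqrte_bound_of_bhattacharyya {R : realType} (m C : R) (I : \bar R) :
  0 <= m <= 1 -> 0 < C -> (0 <= I)%E ->
  ((1 - m ^+ 2)%:E <= C^-1%:E * ((4^-1)%:E * I))%E ->
  (sqrte (2 - 2 * m)%:E <= (Num.sqrt (2 * C))^-1%:E * sqrte I)%E.
Proof.
move=> /andP[m0 m1] C0 I0 bound.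
have C20 : 0 <= (2 * C)^-1 by rewrite invr_ge0 mulr_ge0 // ltW.
have -> : ((Num.sqrt (2 * C))^-1)%:E = sqrte ((2 * C)^-1)%:E.
  by rewrite /= sqrtrV // mulr_ge0 ?ltW.
rewrite -sqrteM ?lee_fin // lee_sqrt ?mule_ge0 ?lee_fin //.
apply: (@le_trans _ _ (2%:E * (1 - m ^+ 2)%:E)%E).
  by rewrite -EFinM lee_fin; nra.
have -> : ((2 * C)^-1)%:E = (2%:E * (C^-1%:E * (4^-1)%:E))%E.
  rewrite -!EFinM; congr (_%:E).
  by rewrite -[4]/(2 * 2)%:R natrM; field; rewrite gt_eqF.
by rewrite -muleA lee_pmul2l ?lte_fin // -muleA.
Qed.

Unset Implicit Arguments.
Set Strict Implicit.

Theorem lemma2 (R : realType) (d : nat)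
    (mu : {measure set 'rV[R]_d -> \bar R}) (eta etah : 'rV[R]_d -> R) (C : R) :
  is_lebesgue_Rd mu ->
  pos_C1_density mu eta ->
  pos_C1_density mu etah ->
  0 < C ->
  poincare mu etah C ->
  (hellinger mu eta etah <= (Num.sqrt (2 * C))^-1%:E * F2 mu eta etah)%E.
Proof.
move=> _ [eta0 [[deta cDeta] ieta]] [etah0 [[detah cDetah] ietah]] C0 P.
rewrite /hellinger /F2 !Defs_sqrteE.
rewrite (integral_hellinger_integrand eta0 etah0 deta detah ieta ietah).
apply: sqrte_bound_of_bhattacharyya C0 _ _.
- by rewrite bhattacharyya_ge0 ?(bhattacharyya_le1 eta0 etah0 deta detah ieta ietah).
- by apply: integral_ge0 => x _; rewrite lee_fin rel_fisher_integrand_ge0.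
- exact: poincare_bhattacharyya P.
Qed.
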